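(* Let $R$ be a commutative ring endowed with a translation-invariant partial order $\le$ on its additive group, and assume that $R$ is strongly localizable. Then $R$ is localizable.
   Context: Rings are commutative with unit $1$. Translation-invariant means $r\le s$ implies $r+t\le s+t$; $R^+=\{r:0\le r\}$. $\mathrm{Loc}(R)$ is the set of $s\in 1+R^+=\{1+t:t\in R^+\}$ such that for all $r\in R$, $rs\in R^+$ implies $r\in R^+$. $R$ is localizable if for every $r\in R$ there exists $s\in\mathrm{Loc}(R)$ with $-s\le r\le s$. $R$ is strongly localizable if $r^2\in R^+$ for all $r\in R$ and $\mathrm{Loc}(R)=1+R^+$. *)

From HB Require Import structures.
From mathcomp Require Import all_boot all_algebra.
Set Implicit Arguments. Unset Strict Implicit. Unset Printing Implicit Defensive.
Import GRing.Theory.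
Local Open Scope ring_scope.

Definition partial_order (R : Type) (le : R -> R -> Prop) : Prop :=
  (forall x, le x x) /\
  (forall x y, le x y -> le y x -> x = y) /\
  (forall x y z, le x y -> le y z -> le x z).

Definition translation_invariant (R : comPzRingType) (le : R -> R -> Prop) : Prop :=
  forall r s t : R, le r s -> le (r + t) (s + t).

Definition Rpos (R : comPzRingType) (le : R -> R -> Prop) (r : R) : Prop := le 0 r.

Definition one_plus_pos (R : comPzRingType) (le : R -> R -> Prop) (s : R) : Prop :=
  exists t, Rpos le t /\ s = 1 + t.

Definition Loc (R : comPzRingType) (le : R -> R -> Prop) (s : R) : Prop :=
  one_plus_pos le s /\ (forall r : R, Rpos le (r * s) -> Rpos le r).

Definition localizable (R : comPzRingType) (le : R -> R -> Prop) : Prop :=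
  forall r : R, exists s, Loc le s /\ le (- s) r /\ le r s.

Definition strongly_localizable (R : comPzRingType) (le : R -> R -> Prop) : Prop :=
  (forall r : R, Rpos le (r ^+ 2)) /\ (forall s : R, Loc le s <-> one_plus_pos le s).

From mathcomp Require Import all_boot all_algebra.
From mathcomp Require Import ring.
Import GRing.Theory.
Local Open Scope ring_scope.

(* Take s = 1 + r^2, which lies in Loc(R) by strong localizability, and so
   does 2 = 1 + 1^2. Since 2 is in Loc(R), nonnegativity may be checked after
   doubling, and 2 (s + r) = (r + 1)^2 + r^2 + 1 and
   2 (s - r) = (r - 1)^2 + r^2 + 1 are sums of squares, hence -s <= r <= s. *)

Section TranslationInvariantOrder.

Variables (R : comPzRingType) (le : R -> R -> Prop).
Hypothesis le_transitive : forall x y z, le x y -> le y z -> le x z.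
Hypothesis le_addr : translation_invariant le.

Lemma ge0_addr a b : le 0 a -> le 0 b -> le 0 (a + b).
Proof.
move=> a_ge0 b_ge0; apply: le_transitive b_ge0 _.
by have := le_addr _ _ b a_ge0; rewrite add0r addrC.
Qed.

Lemma le_of_subr_ge0 a b : le 0 (b - a) -> le a b.
Proof. by move/(le_addr _ _ a); rewrite add0r subrK. Qed.

Hypothesis sqr_ge0 : forall r : R, le 0 (r ^+ 2).

Lemma ge0_1 : le 0 1.
Proof. by have := sqr_ge0 1; rewrite expr1n. Qed.

Lemma ge0_sqrDsqrD1 x y : le 0 (x ^+ 2 + (y ^+ 2 + 1)).
Proof. by apply: ge0_addr => //; apply: ge0_addr => //; exact: ge0_1. Qed.

Hypothesis ge0_halve : forall x : R, le 0 (x * 2) -> le 0 x.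

Lemma oppr_1sqr_le r : le (- (1 + r ^+ 2)) r.
Proof.
apply: le_of_subr_ge0; rewrite opprK; apply: ge0_halve.
have -> : (r + (1 + r ^+ 2)) * 2 = (r + 1) ^+ 2 + (r ^+ 2 + 1) by ring.
exact: ge0_sqrDsqrD1.
Qed.

Lemma le_1sqr r : le r (1 + r ^+ 2).
Proof.
apply: le_of_subr_ge0; apply: ge0_halve.
have -> : (1 + r ^+ 2 - r) * 2 = (r - 1) ^+ 2 + (r ^+ 2 + 1) by ring.
exact: ge0_sqrDsqrD1.
Qed.

End TranslationInvariantOrder.

Theorem proposition2 (R : comPzRingType) (le : R -> R -> Prop) :
  partial_order le -> translation_invariant le ->
  strongly_localizable le -> localizable le.
Proof.
move=> [_ [_ le_trans]] le_addr [sqr_ge0 Loc_iff] r.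
have Loc_2 : Loc le 2 by apply/Loc_iff; exists 1; split; first exact: ge0_1.
have ge0_halve : forall x : R, le 0 (x * 2) -> le 0 x by apply: Loc_2.2.
exists (1 + r ^+ 2); split; first by apply/Loc_iff; exists (r ^+ 2).
split; [exact: oppr_1sqr_le | exact: le_1sqr].
Qed.
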